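(* Let $(R,d)$ be a fusion algebra whose set $I$ of irreducible objects is infinite, and let $X\subseteq I$ be a finite generating set. Then the limits $\lim_{n\to\infty}\sqrt[n]{|B_X(n)|}$ and $\lim_{n\to\infty}\sqrt[n]{|S_X(n)|}$ exist and belong to $[1,\infty)$.
   Context: A fusion algebra $(R,d)$ consists of a set $I$ with distinguished $e$ and involution $\alpha\mapsto\bar\alpha$, a unital ring structure on $R=\mathbb{Z}[I]$ with unit $e$ and $\xi\eta=\sum_\alpha N^\alpha_{\xi,\eta}\alpha$, $N^\alpha_{\xi,\eta}\in\mathbb{Z}_{\ge0}$ finitely many nonzero, the involution extending to a $\mathbb{Z}$-linear antimultiplicative involution, Frobenius reciprocity $N^\alpha_{\xi,\eta}=N^\xi_{\alpha,\bar\eta}=N^\eta_{\bar\xi,\alpha}$, and $\mathbb{Z}$-linear multiplicative $d:R\to\mathbb{R}$ with $d(\bar\alpha)=d(\alpha)\ge1$ on $I$. Write $\alpha\subseteq r$ if $\alpha$ has nonzero coefficient in $r$. $|A|=\sum_{\alpha\in A}d(\alpha)^2$. A finite generating set is a finite $X\subseteq I$ with $\bar X=X$ such that every $\alpha\in I$ satisfies $\alpha\subseteq x_1\cdots x_n$ for some $x_i\in X$. $\ell_X(e)=0$, otherwise $\ell_X(\alpha)=\min\{n\ge1:\exists x_1,\dots,x_n\in X,\ \alpha\subseteq x_1\cdots x_n\}$; $B_X(n)=\{\alpha:\ell_X(\alpha)\le n\}$, $S_X(n)=\{\alpha:\ell_X(\alpha)=n\}$. *)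

From HB Require Import structures.
From mathcomp Require Import all_boot all_order all_algebra.
From mathcomp Require Import all_classical all_reals all_analysis.
Set Implicit Arguments. Unset Strict Implicit. Unset Printing Implicit Defensive.
Import Order.TTheory GRing.Theory Num.Theory.

(* A fusion algebra on the basis I (a choiceType, so that it has decidable
   equality).  fa_N a x y is the structure constant N^a_{x,y}, i.e.
   x * y = \sum_a N^a_{x,y} a.  fa_supp x y is a finite list containing
   every a with N^a_{x,y} <> 0 (finiteness of the support). *)
Record fusion_algebra (I : choiceType) := FusionAlgebra {
  fa_e : I;
  fa_bar : I -> I;
  fa_N : I -> I -> I -> nat;
  fa_supp : I -> I -> seq I;
  fa_suppP : forall a x y, fa_N a x y != 0%N -> a \in fa_supp x y;
  fa_unitl : forall a y, fa_N a fa_e y = nat_of_bool (a == y);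
  fa_unitr : forall a x, fa_N a x fa_e = nat_of_bool (a == x);
  (* associativity: coefficient of a in (x y) z and in x (y z) *)
  fa_assoc : forall x y z a,
    (\sum_(b <- undup (fa_supp x y)) fa_N b x y * fa_N a b z =
     \sum_(b <- undup (fa_supp y z)) fa_N b y z * fa_N a x b)%N;
  (* the involution, extended Z-linearly, is an antimultiplicative involution *)
  fa_barK : involutive fa_bar;
  fa_bar_anti : forall a x y, fa_N (fa_bar a) (fa_bar y) (fa_bar x) = fa_N a x y;
  fa_frob1 : forall a x y, fa_N a x y = fa_N x a (fa_bar y);
  fa_frob2 : forall a x y, fa_N a x y = fa_N y (fa_bar x) a
}.

Local Open Scope ring_scope.

(* d : R -> reals, given on the basis I and extended Z-linearly; it is a
   (unital) ring morphism, with d(bar a) = d(a) >= 1 on I. *)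
Definition is_dimension (R : realType) (I : choiceType) (F : fusion_algebra I)
    (d : I -> R) : Prop :=
  [/\ d (fa_e F) = 1,
      forall a, d (fa_bar F a) = d a,
      forall a, 1 <= d a
    & forall x y, d x * d y =
        \sum_(a <- undup (fa_supp F x y)) (fa_N F a x y)%:R * d a].

Section Words.
Variables (I : choiceType) (F : fusion_algebra I).

Fixpoint wsupp (w : seq I) : seq I :=
  match w with
  | [::] => [:: fa_e F]
  | x :: w' => flatten [seq fa_supp F x b | b <- undup (wsupp w')]
  end.

Fixpoint wcoef (w : seq I) (a : I) : nat :=
  match w with
  | [::] => nat_of_bool (a == fa_e F)
  | x :: w' => (\sum_(b <- undup (wsupp w')) wcoef w' b * fa_N F a x b)%N
  end.

Definition subprod (a : I) (w : seq I) : Prop := wcoef w a <> 0%N.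

Definition generating_set (X : seq I) : Prop :=
  (forall x, x \in X -> fa_bar F x \in X) /\
  (forall a : I, exists w : seq I, all (fun x => x \in X) w /\ subprod a w).

Fixpoint words (X : seq I) (k : nat) : seq (seq I) :=
  match k with
  | 0 => [:: [::]]
  | k'.+1 => [seq x :: w | x <- X, w <- words X k']
  end.

(* B_X(n) = {a | l_X(a) <= n} = {e} U {a | a \subseteq x_1..x_k, 1<=k<=n, x_i in X},
   as a duplicate-free list *)
Definition ballX (X : seq I) (n : nat) : seq I :=
  undup (fa_e F :: flatten [seq [seq a <- wsupp w | wcoef w a != 0%N]
                           | w <- flatten [seq words X k | k <- iota 1 n]]).

(* S_X(n) = {a | l_X(a) = n} : {e} for n = 0, B_X(n) \ B_X(n-1) for n >= 1 *)
Definition sphereX (X : seq I) (n : nat) : seq I :=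
  if n is n'.+1 then [seq a <- ballX X n | a \notin ballX X n'] else [:: fa_e F].

(* |A| = \sum_{a in A} d(a)^2 *)
Definition wsize (R : realType) (d : I -> R) (A : seq I) : R :=
  \sum_(a <- A) d a ^+ 2.

End Words.

Definition infinite_type (I : choiceType) : Prop :=
  ~ exists s : seq I, forall a : I, a \in s.

(* Fekete's lemma makes n-th roots of a submultiplicative sequence converge,
   to a limit >= 1 if all terms are >= 1. Both |B_X(n)| and |S_X(n)| are such
   sequences. Splitting a word of length n + m shows B_X(n + m) ⊆ B_X(n) B_X(m)
   and, since lengths add, S_X(n + m) ⊆ S_X(n) S_X(m). For fixed b, c the
   constituents a ⊆ bc satisfy d(a) <= d(b) d(c) and sum d(a) <= d(b) d(c) (as
   d(b) d(c) = sum N^a_{b,c} d(a)), so sum_{a ⊆ bc} d(a)^2 <= (d(b) d(c))^2, and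
   summing over b, c gives |AB| <= |A| |B|. Finally I is infinite and X
   generates, so every sphere is nonempty and |S_X(n)| >= 1. *)
From HB Require Import structures.
From mathcomp Require Import all_boot all_order all_algebra.
From mathcomp Require Import all_classical all_reals all_analysis.
From mathcomp Require Import lra.
Set Implicit Arguments. Unset Strict Implicit. Unset Printing Implicit Defensive.
Import Order.TTheory GRing.Theory Num.Theory numFieldNormedType.Exports.
Local Open Scope classical_set_scope.
Local Open Scope ring_scope.

Section Fekete.
Variables (R : realType) (a : nat -> R).
Hypothesis a_ge0 : forall n, 0 <= a n.
Hypothesis a_subadd : forall n m, a (n + m)%N <= a n + a m.

Lemma subadditive_divn k n : a n <= (n %/ k)%N%:R * a k + a (n %% k)%N.
Proof.
rewrite {1}(divn_eq n k); elim: (n %/ k)%N => [|q IH]; first by rewrite mul0r add0r.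
rewrite mulSn -addnA (le_trans (a_subadd _ _)) // -addn1 natrD mulrDl mul1r.
by rewrite addrAC [leLHS]addrC lerD2r.
Qed.

Let mean n := a n / n%:R.
Let means := [set mean n | n in [set n | (0 < n)%N]].
Let means_has_inf : has_inf means.
Proof. by split; [exists (mean 1), 1%N | exists 0 => _ [n _ <-]; rewrite divr_ge0]. Qed.

Lemma mean_le_offset k n : (0 < k)%N -> (0 < n)%N ->
  mean n <= mean k + (\sum_(r < k) a r) / n%:R.
Proof.
move=> k0 n0; have nR : 0 < n%:R :> R by rewrite ltr0n.
have kR : 0 < k%:R :> R by rewrite ltr0n.
have rem_le : a (n %% k)%N <= \sum_(r < k) a r.
  by rewrite (bigD1 (Ordinal (ltn_pmod n k0))) //= lerDl sumr_ge0.
rewrite /mean ler_pdivrMr // mulrDl divfK ?gt_eqF //.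
rewrite (le_trans (subadditive_divn k n)) // lerD // -mulrA [leLHS]mulrC.
by rewrite ler_wpM2l // ler_pdivlMl // -natrM ler_nat mulnC leq_divM.
Qed.

Definition fekete_limit := inf means.

Lemma fekete_limit_ge0 : 0 <= fekete_limit.
Proof. by case: means_has_inf => ne _; apply: lb_le_inf => // _ [n _ <-]; rewrite divr_ge0. Qed.

Lemma fekete_cvg : mean @ \oo --> fekete_limit.
Proof.
apply/cvgrPdist_le => eps eps0.
have [_ [k k0 <-]] := inf_adherent (divr_gt0 eps0 (ltr0n R 2)) means_has_inf.
rewrite -/fekete_limit => mean_k; pose M := \sum_(r < k) a r.
near=> n.
have n0 : (0 < n)%N by near: n; exists 1%N.
have Ln : fekete_limit <= mean n.
  by apply: ge_inf; [case: means_has_inf | exists n].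
have Mn : M / n%:R <= eps / 2.
  near: n; apply: filterS (nbhs_infty_gtr (M * 2 / eps)) => n Mn.
  have M_ge0 : 0 <= M by rewrite sumr_ge0.
  have n_gt0 : 0 < n%:R :> R.
    by rewrite (le_lt_trans _ Mn) // divr_ge0 ?mulr_ge0 // ltW.
  by move: Mn; rewrite ler_pdivrMr // ltr_pdivrMr //; lra.
rewrite distrC ger0_norm ?subr_ge0 //.
have := mean_le_offset k0 n0; rewrite -/M; lra.
Unshelve. all: by end_near.
Qed.
End Fekete.

Lemma submultiplicative_root_cvg (R : realType) (f : nat -> R) :
  (forall n, 1 <= f n) -> (forall n m, f (n + m)%N <= f n * f m) ->
  exists l : R, 1 <= l /\ (fun n : nat => f n `^ n%:R^-1) @ \oo --> l.
Proof.
move=> f_ge1 f_submul; have f_gt0 n : 0 < f n := lt_le_trans ltr01 (f_ge1 n).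
have lnf_ge0 n : 0 <= ln (f n) by rewrite ln_ge0.
have lnf_subadd n m : ln (f (n + m)%N) <= ln (f n) + ln (f m).
  by rewrite -lnM ?posrE // ler_ln ?posrE ?mulr_gt0.
exists (expR (fekete_limit (fun n => ln (f n)))); split.
  by rewrite -expR0 ler_expR fekete_limit_ge0.
have -> : (fun n : nat => f n `^ n%:R^-1) = expR \o (fun n => ln (f n) / n%:R).
  by apply: funext => n /=; rewrite /powR gt_eqF // mulrC.
exact: continuous_cvg (@continuous_expR R _) (fekete_cvg lnf_ge0 lnf_subadd).
Qed.

Lemma sum_mul_neq0P (T : eqType) (s : seq T) (f g : T -> nat) :
  (forall b, f b != 0%N -> b \in s) ->
  reflect (exists b, f b != 0%N /\ g b != 0%N)
          (\sum_(b <- undup s) f b * g b != 0)%N.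
Proof.
move=> f_supp; rewrite sum_nat_seq_neq0; apply: (iffP hasP) => [[b _]|[b [fb gb]]].
  by rewrite /= muln_eq0 negb_or => /andP[fb gb]; exists b.
by exists b; rewrite ?mem_undup ?f_supp //= muln_eq0 negb_or fb.
Qed.

Lemma ler_sum_mem (R : numDomainType) (T : eqType) (s : seq T) (g : T -> R) x :
  (forall y, 0 <= g y) -> x \in s -> g x <= \sum_(y <- s) g y.
Proof.
move=> g_ge0; elim: s => // y s IH; rewrite in_cons big_cons => /orP[/eqP ->|/IH].
  by rewrite lerDl sumr_ge0.
by move/le_trans; apply; rewrite lerDr.
Qed.

Lemma ler_sum_uniq_sub (R : numDomainType) (T : eqType) (s1 s2 : seq T) (g : T -> R) :
  (forall y, 0 <= g y) -> uniq s1 -> uniq s2 -> {subset s1 <= s2} ->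
  \sum_(y <- s1) g y <= \sum_(y <- s2) g y.
Proof.
move=> g_ge0 s1_uniq s2_uniq s12.
have s1_perm : perm_eq s1 [seq y <- s2 | y \in s1].
  apply: uniq_perm; rewrite ?filter_uniq // => y.
  by rewrite mem_filter; case: (boolP (y \in s1)) => // /s12 ->.
by rewrite (perm_big _ s1_perm) big_filter [leRHS](bigID (mem s1)) lerDl sumr_ge0.
Qed.

Section Words.
Variables (I : choiceType) (F : fusion_algebra I).
Local Notation N := (fa_N F).
Local Notation e := (fa_e F).

Lemma fa_N_assoc_neq0 x y z a :
  (exists b, N b x y != 0%N /\ N a b z != 0%N) <->
  (exists b, N b y z != 0%N /\ N a x b != 0%N).
Proof.
have lhsP := sum_mul_neq0P (fun b => N a b z) (fun b => @fa_suppP I F b x y).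
have rhsP := sum_mul_neq0P (fun b => N a x b) (fun b => @fa_suppP I F b y z).
by split=> [/lhsP|/rhsP]; [rewrite fa_assoc => /rhsP | rewrite -fa_assoc => /lhsP].
Qed.

Lemma fa_N_unitl_neq0 a c : (N a e c != 0%N) = (a == c).
Proof. by rewrite fa_unitl; case: (a == c). Qed.

Lemma wcoef_nil_neq0 a : (wcoef F [::] a != 0%N) = (a == e).
Proof. by rewrite /=; case: (a == e). Qed.

Lemma mem_wsupp w a : wcoef F w a != 0%N -> a \in wsupp F w.
Proof.
elim: w a => [|x w IH] a; first by rewrite wcoef_nil_neq0 => /eqP ->; rewrite mem_head.
rewrite /= sum_nat_seq_neq0 => /hasP[b w_b]; rewrite /= muln_eq0 negb_or.
by case/andP=> _ Nab; apply/flatten_mapP; exists b => //; apply: fa_suppP.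
Qed.

Lemma wcoef_consP x w a :
  reflect (exists b, wcoef F w b != 0%N /\ N a x b != 0%N) (wcoef F (x :: w) a != 0%N).
Proof. exact: sum_mul_neq0P (@mem_wsupp w). Qed.

Lemma wcoef_cat_neq0 u v a : wcoef F (u ++ v) a != 0%N <->
  exists b c, [/\ wcoef F u b != 0%N, wcoef F v c != 0%N & N a b c != 0%N].
Proof.
elim: u a => [|x u IH] a.
  split=> [va | [b [c [ub vc Nabc]]]].
    by exists e, a; rewrite wcoef_nil_neq0 fa_N_unitl_neq0 !eqxx.
  by move: ub Nabc; rewrite wcoef_nil_neq0 => /eqP ->; rewrite fa_N_unitl_neq0 => /eqP ->.
rewrite cat_cons; split.
- case/wcoef_consP=> b' [/IH [b'' [c [ub'' vc Nb']]] Nab'].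
  have [b [Nb Nabc]] : exists b, N b x b'' != 0%N /\ N a b c != 0%N.
    by apply/fa_N_assoc_neq0; exists b'.
  by exists b, c; split=> //; apply/wcoef_consP; exists b''.
- case=> b [c [/wcoef_consP [b'' [ub'' Nb]] vc Nabc]].
  have [b' [Nb' Nab']] : exists b', N b' b'' c != 0%N /\ N a x b' != 0%N.
    by apply/fa_N_assoc_neq0; exists b.
  by apply/wcoef_consP; exists b'; split=> //; apply/IH; exists b'', c.
Qed.

Variable X : seq I.

Definition len_le n a :=
  exists w, [/\ (size w <= n)%N, all (fun x => x \in X) w & wcoef F w a != 0%N].

Definition len_eq n a := len_le n a /\ forall k, (k < n)%N -> ~ len_le k a.

Lemma len_le_mono k n a : (k <= n)%N -> len_le k a -> len_le n a.
Proof. by move=> kn [w [wk Xw wa]]; exists w; split=> //; apply: leq_trans kn. Qed.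

Lemma len_le0 a : len_le 0 a <-> a = e.
Proof.
split=> [[[|x w] [//= _ _]]|->]; first by rewrite wcoef_nil_neq0 => /eqP.
by exists [::]; rewrite wcoef_nil_neq0.
Qed.

Lemma mem_words k w : (w \in words X k) = (size w == k) && all (fun x => x \in X) w.
Proof.
elim: k w => [|k IH] w /=; first by case: w.
apply/allpairsP/idP => [[[x w'] /= [Xx]]|].
  by rewrite IH => /andP[/eqP <- Xw'] ->; rewrite /= eqxx Xx.
case: w => // x w /= /andP[]; rewrite eqSS => kw /andP[Xx Xw].
by exists (x, w); rewrite /= IH kw Xw.
Qed.

Lemma mem_ballX n a : a \in ballX F X n <-> len_le n a.
Proof.
rewrite mem_undup in_cons; split.
  case/orP=> [/eqP ->|]; first exact/(len_le_mono (leq0n n))/len_le0.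
  case/flatten_mapP=> w /flatten_mapP[k]; rewrite mem_iota mem_words add1n.
  case/andP=> _ kn /andP[/eqP wk Xw]; rewrite mem_filter => /andP[wa _].
  by exists w; split; rewrite // wk -ltnS.
case=> [[|x w] [wn Xw wa]]; first by rewrite -wcoef_nil_neq0 wa.
apply/orP; right; apply/flatten_mapP; exists (x :: w).
  apply/flatten_mapP; exists (size (x :: w)); last by rewrite mem_words eqxx.
  by rewrite mem_iota add1n ltnS wn.
by rewrite mem_filter wa mem_wsupp.
Qed.

Lemma mem_sphereX n a : a \in sphereX F X n <-> len_eq n a.
Proof.
case: n => [|n] /=.
  rewrite mem_seq1; split=> [/eqP ->|[/len_le0 -> _]] //.
  by split=> //; apply/len_le0.
rewrite mem_filter; split=> [/andP[a_n /mem_ballX a_Sn]|[a_Sn a_min]].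
  split=> // k kn a_k; move/negP: a_n; apply; apply/mem_ballX.
  exact: len_le_mono a_k.
apply/andP; split; last exact/mem_ballX.
by apply/negP => /mem_ballX; apply: a_min.
Qed.

Lemma len_le_mul p q a b c :
  len_le p b -> len_le q c -> N a b c != 0%N -> len_le (p + q) a.
Proof.
move=> [u [up Xu ub]] [v [vq Xv vc]] Nabc; exists (u ++ v); split.
- by rewrite size_cat leq_add.
- by rewrite all_cat Xu Xv.
- by apply/wcoef_cat_neq0; exists b, c.
Qed.

Lemma len_le_split n m a : len_le (n + m) a ->
  exists b c, [/\ len_le n b, len_le m c & N a b c != 0%N].
Proof.
case=> w [wnm]; rewrite -(cat_take_drop n w) all_cat => /andP[Xu Xv].
case/wcoef_cat_neq0=> b [c [ub vc Nabc]]; exists b, c; split=> //.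
- by exists (take n w); split=> //; rewrite size_take; case: ltnP.
- by exists (drop n w); split=> //; rewrite size_drop leq_subLR.
Qed.

Lemma len_eq_split n m a : len_eq (n + m) a ->
  exists b c, [/\ len_eq n b, len_eq m c & N a b c != 0%N].
Proof.
case=> /len_le_split [b [c [b_n c_m Nabc]]] a_min; exists b, c; split=> //.
- split=> // k kn b_k; apply: (a_min (k + m)%N); first by rewrite ltn_add2r.
  exact: len_le_mul b_k c_m Nabc.
- split=> // k km c_k; apply: (a_min (n + k)%N); first by rewrite ltn_add2l.
  exact: len_le_mul b_n c_k Nabc.
Qed.

Lemma len_eq_exists n : infinite_type I -> generating_set F X -> exists b, len_eq n b.
Proof.
move=> I_inf [_ X_gen].
have [a a_n] : exists a, ~ len_le n a.
  apply: boolp.contrapT => all_n; apply: I_inf; exists (ballX F X n) => a.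
  by apply/mem_ballX; apply: boolp.contrapT => a_n; apply: all_n; exists a.
have [w [Xw wa]] := X_gen a.
have {Xw wa} : len_le (size w) a by exists w; split=> //; apply/eqP.
elim: (size w) a a_n => [|k IH] a a_n a_Sk; first by case: a_n; apply: len_le_mono a_Sk.
have [a_k|a_k] := boolp.pselect (len_le k a); first exact: IH a_k.
have n_k : (n <= k)%N.
  by rewrite leqNgt; apply/negP => kn; apply: a_n; apply: len_le_mono a_Sk.
(* l_X(a) = k + 1 > n, so splitting a as a product of lengths n and k + 1 - n
   produces an element of the sphere S_X(n). *)
have a_len : len_eq (n + (k.+1 - n)) a.
  rewrite subnKC ?(leq_trans n_k) //; split=> // j jk a_j.
  by apply: a_k; apply: len_le_mono a_j.
by have [b [c [b_n _ _]]] := len_eq_split a_len; exists b.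
Qed.

End Words.

Section Dimension.
Variables (R : realType) (I : choiceType) (F : fusion_algebra I) (d : I -> R).
Hypothesis d_dim : is_dimension F d.
Local Notation N := (fa_N F).

Let d_ge1 a : 1 <= d a. Proof. by case: d_dim. Qed.
Let d_ge0 a : 0 <= d a. Proof. exact: le_trans ler01 (d_ge1 a). Qed.
Let d_mul b c : d b * d c = \sum_(a <- undup (fa_supp F b c)) (N a b c)%:R * d a.
Proof. by case: d_dim. Qed.

Lemma wsize_ge1 (s : seq I) a : a \in s -> 1 <= wsize d s.
Proof.
move=> sa; apply: le_trans (ler_sum_mem (fun y => sqr_ge0 (d y)) sa).
by rewrite exprn_ege1.
Qed.

Lemma dim_le_mul_supp a b c : N a b c != 0%N -> d a <= d b * d c.
Proof.
move=> Nabc; have term_ge0 y : 0 <= (N y b c)%:R * d y by rewrite mulr_ge0.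
rewrite d_mul; apply: le_trans (ler_sum_mem (x := a) term_ge0 _).
  by rewrite /= ler_peMl // ler1n lt0n.
by rewrite mem_undup fa_suppP.
Qed.

Lemma sum_sq_supp_le b c :
  \sum_(a <- undup (fa_supp F b c) | N a b c != 0%N) d a ^+ 2 <= (d b * d c) ^+ 2.
Proof.
have sum_le : \sum_(a <- undup (fa_supp F b c) | N a b c != 0%N) d a <= d b * d c.
  rewrite d_mul big_mkcond /=; apply: ler_sum => a _.
  by case: ifP => [Nabc|_]; rewrite ?mulr_ge0 // ler_peMl // ler1n lt0n.
apply: le_trans (_ : \sum_(a <- _ | N a b c != 0%N) d a * (d b * d c) <= _).
  by apply: ler_sum => a Nabc; rewrite expr2 ler_wpM2l ?dim_le_mul_supp.
by rewrite -big_distrl /= [leRHS]expr2 ler_wpM2r ?mulr_ge0.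
Qed.

Lemma wsize_le_mul (A s t : seq I) : uniq A ->
  (forall a, a \in A -> exists b c, [/\ b \in s, c \in t & N a b c != 0%N]) ->
  wsize d A <= wsize d s * wsize d t.
Proof.
move=> A_uniq A_cover.
pose G b c a := if N a b c != 0%N then d a ^+ 2 else 0.
have G_ge0 b c a : 0 <= G b c a by rewrite /G; case: ifP; rewrite ?sqr_ge0.
have -> : wsize d s * wsize d t = \sum_(b <- s) \sum_(c <- t) (d b * d c) ^+ 2.
  rewrite /wsize big_distrl; apply: eq_bigr => b _.
  by rewrite big_distrr; apply: eq_bigr => c _; rewrite exprMn.
apply: (le_trans (_ : _ <= \sum_(a <- A) \sum_(b <- s) \sum_(c <- t) G b c a)).
  rewrite /wsize big_seq [leRHS]big_seq; apply: ler_sum => a /A_cover[b [c [sb tc Nabc]]].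
  apply: le_trans (ler_sum_mem (fun b => sumr_ge0 _ (fun c _ => G_ge0 b c a)) sb).
  by apply: le_trans (ler_sum_mem (G_ge0 b ^~ a) tc); rewrite /G Nabc.
rewrite exchange_big; apply: ler_sum => b _; rewrite exchange_big; apply: ler_sum => c _.
apply: le_trans (sum_sq_supp_le b c); rewrite -big_mkcond -big_filter -[leRHS]big_filter.
apply: ler_sum_uniq_sub => [a|||a]; rewrite ?sqr_ge0 ?filter_uniq ?undup_uniq //.
by rewrite !mem_filter mem_undup => /andP[Nabc _]; rewrite Nabc fa_suppP.
Qed.

End Dimension.

Theorem lemma3p8 (R : realType) (I : choiceType) (F : fusion_algebra I)
    (d : I -> R) (X : seq I) :
  is_dimension F d -> infinite_type I -> generating_set F X ->
  (exists l : R, 1 <= l /\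
     (fun n : nat => wsize d (ballX F X n) `^ (n%:R^-1)) @ \oo --> l) /\
  (exists l : R, 1 <= l /\
     (fun n : nat => wsize d (sphereX F X n) `^ (n%:R^-1)) @ \oo --> l).
Proof.
move=> d_dim I_inf X_gen.
have sphere_uniq n : uniq (sphereX F X n).
  by case: n => //= n; rewrite filter_uniq ?undup_uniq.
split; apply: submultiplicative_root_cvg.
- move=> n; apply: (wsize_ge1 d_dim (a := fa_e F)); apply/mem_ballX.
  exact/(len_le_mono (leq0n n))/len_le0.
- move=> n m; apply: (wsize_le_mul d_dim); rewrite ?undup_uniq //.
  move=> a /mem_ballX/len_le_split[b [c [b_n c_m Nabc]]].
  by exists b, c; split=> //; apply/mem_ballX.
- move=> n; have [b b_n] := len_eq_exists n I_inf X_gen.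
  by apply: (wsize_ge1 d_dim (a := b)); apply/mem_sphereX.
- move=> n m; apply: (wsize_le_mul d_dim) => // a.
  move=> /mem_sphereX/len_eq_split[b [c [b_n c_m Nabc]]].
  by exists b, c; split=> //; apply/mem_sphereX.
Qed.
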